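(* Let $\varphi:[0,\infty)\to\mathbb{R}$ be a continuous function which is Lebesgue integrable on $(0,\infty)$, of bounded variation on $[0,\infty)$, and satisfies $\varphi(x)\to 0$ as $x\to\infty$. Define its Fourier–Stieltjes transform $$\Phi(t)=\int_0^\infty e^{ixt}\,d\varphi(x),\qquad t\in\mathbb{R}.$$ Then $\Phi(t)\to 0$ as $|t|\to\infty$ (i.e. $\varphi$ supports a Rajchman measure) if and only if $\Phi(t)$ has a finite limit as $|t|\to\infty$.
   Context: A function $\varphi$ of bounded variation is said to support a Rajchman measure if the Fourier–Stieltjes transform of the measure $d\varphi$ tends to zero at infinity. *)

From HB Require Import structures.
From mathcomp Require Import all_boot all_order all_algebra.
From mathcomp Require Import all_classical all_reals all_analysis.
Set Implicit Arguments. Unset Strict Implicit. Unset Printing Implicit Defensive.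
Import Order.TTheory GRing.Theory Num.Theory.
Import numFieldNormedType.Exports.
Local Open Scope classical_set_scope.
Local Open Scope ring_scope.

Section defs.
Context {R : realType}.

Definition bounded_variation_halfline (phi : R -> R) : Prop :=
  exists M : R, forall b : R, 0 <= b -> (total_variation 0 b phi <= M%:E)%E.

(* Jordan decomposition of phi on [0,+oo) (extended as constant on (-oo,0]):
   phi = jordan_pos phi - jordan_neg phi on [0,+oo); both parts are
   nondecreasing (and continuous when phi is continuous and BV). *)
Definition jordan_pos (phi : R -> R) (x : R) : R :=
  fine (pos_tv 0 phi (Num.max x 0)).
Definition jordan_neg (phi : R -> R) (x : R) : R :=
  fine (neg_tv 0 phi (Num.max x 0)).

(* Turn a function into a cumulative function (nondecreasing and
   right-continuous) when it is one; the default (identity) is never used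
   under the hypotheses of the theorem. *)
Definition to_cumulative (f : R -> R) : cumulative R R :=
  match pselect (nondecreasing f /\ right_continuous f) with
  | left H => HB.pack f (isCumulative.Build R _ R f (proj1 H) (proj2 H))
  | right _ => [the cumulative R R of @idfun R]
  end.

Definition dpos (phi : R -> R) := lebesgue_stieltjes_measure (to_cumulative (jordan_pos phi)).
Definition dneg (phi : R -> R) := lebesgue_stieltjes_measure (to_cumulative (jordan_neg phi)).

(* Integral over [0,+oo) w.r.t. the (signed) Stieltjes measure dphi.  Since phi
   is continuous, dphi has no atom at 0, so integrating over (0,+oo) is the
   same as integrating over [0,+oo). *)
Definition stieltjes_integral (phi : R -> R) (g : R -> R) : R :=
  Rintegral (dpos phi) `]0, +oo[ g - Rintegral (dneg phi) `]0, +oo[ g.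

(* Fourier-Stieltjes transform Phi(t) = int_0^oo e^{ixt} dphi(x), returned as
   the pair (Re Phi(t), Im Phi(t)) = (int cos(xt) dphi, int sin(xt) dphi). *)
Definition fourier_stieltjes (phi : R -> R) (t : R) : R * R :=
  (stieltjes_integral phi (fun x => cos (x * t)),
   stieltjes_integral phi (fun x => sin (x * t))).

End defs.

From Pilot Require Import Defs.
From HB Require Import structures.
From mathcomp Require Import all_boot all_order all_algebra.
From mathcomp Require Import all_classical all_reals all_analysis.
From mathcomp Require Import ring lra.
From mathcomp Require Import measurable_realfun.
Set Implicit Arguments. Unset Strict Implicit. Unset Printing Implicit Defensive.
Import Order.TTheory GRing.Theory Num.Theory.
Import numFieldNormedType.Exports.
Local Open Scope classical_set_scope.
Local Open Scope ring_scope.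

(* If Phi(t) -> L as t -> +oo, then Phi(k) -> L
   along the integers, hence so do the Cesaro means (1/n) sum_(k <= n) Phi(k).
   Such a mean is the integral against dphi of (1/n) sum_(k <= n) e^(ikx), which
   is bounded by 1 and, away from 2 pi Z, by 1 / (n |sin (x/2)|).  The Jordan
   parts dphi+ and dphi- are finite measures on (0, +oo) without atoms (phi is
   continuous), so 2 pi Z is negligible for both and dominated convergence
   yields L = 0. *)

Local Notation jneg := Defs.jordan_neg.

Section jordan_neg.
Context {R : realType}.
Variables (g : R -> R) (M : R).
Hypothesis g_cont : {within `[0, +oo[, continuous g}.
Hypothesis g_bv : forall b : R, 0 <= b -> (total_variation 0 b g <= M%:E)%E.

Lemma bounded_variation0 b : 0 <= b -> bounded_variation 0 b g.
Proof.
move=> b0; apply/bounded_variationP => //.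
rewrite ge0_fin_numE; last exact: total_variation_ge0.
exact: le_lt_trans (g_bv b0) (ltry _).
Qed.

Lemma total_variation0_fin_num b : 0 <= b -> total_variation 0 b g \is a fin_num.
Proof. by move=> b0; apply/bounded_variationP => //; exact: bounded_variation0. Qed.

Lemma jordan_negE x : 0 <= x -> jneg g x = (fine (total_variation 0 x g) - g x) / 2.
Proof.
move=> x0; rewrite /Defs.jordan_neg max_l // /neg_tv.
by rewrite -(fineK (total_variation0_fin_num x0)) -EFinB -EFinM.
Qed.

Lemma jordan_neg_nondecreasing : nondecreasing (jneg g).
Proof.
move=> x y xy; rewrite /Defs.jordan_neg.
have y0 : 0 <= Num.max y 0 by rewrite le_max lexx orbT.
have mxy : Num.max x 0 <= Num.max y 0 by rewrite ge_max !le_max xy lexx !orbT.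
apply: (@fine_neg_tv_nondecreasing _ 0 (Num.max y 0)) => //.
- exact: bounded_variation0.
- by rewrite in_itv/= le_max lexx orbT /= mxy.
- by rewrite in_itv/= y0 lexx.
Qed.

Lemma jordan_neg_sub0_le x : 0 <= x -> jneg g x - jneg g 0 <= M.
Proof.
move=> x0; rewrite (jordan_negE x0) (jordan_negE (lexx 0)) total_variationxx /=.
have tvx := total_variation0_fin_num x0.
have le1 : `|g x - g 0| <= fine (total_variation 0 x g).
  by rewrite -lee_fin fineK// total_variation_ge.
have le2 : fine (total_variation 0 x g) <= M by rewrite -lee_fin fineK// g_bv.
have := ler_norm (g 0 - g x); rewrite distrC.
lra.
Qed.

Let g_cont_gt0 x : 0 < x -> {for x, continuous g}.
Proof.
move=> x0; have [+ _] := (continuous_within_itvcyP 0 g).1 g_cont.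
by apply; rewrite in_itv/= x0.
Qed.

Let g_right_cont x : 0 <= x -> g @ x^'+ --> g x.
Proof.
rewrite le_eqVlt => /predU1P[<-|x0].
  by have [_] := (continuous_within_itvcyP 0 g).1 g_cont.
exact: cvg_at_right_filter (g_cont_gt0 x0).
Qed.

Lemma jordan_neg_right_continuous : right_continuous (jneg g).
Proof.
move=> x; have [x0|x0] := ltP x 0.
  have jnegE : {near x^'+, cst (jneg g x) =1 jneg g}.
    near=> y; rewrite /Defs.jordan_neg /= max_r ?(ltW x0)// max_r//.
    by apply: ltW; near: y; exact: nbhs_right_lt.
  exact: cvg_trans (near_eq_cvg jnegE) (cvg_cst _).
have jnegE : {near x^'+, fine \o neg_tv 0 g =1 jneg g}.
  near=> y; rewrite /Defs.jordan_neg /= max_l//.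
  by apply: (le_trans x0); apply: ltW; near: y; exact: nbhs_right_gt.
have -> : jneg g x = fine (neg_tv 0 g x) by rewrite /Defs.jordan_neg max_l.
apply: cvg_trans (near_eq_cvg jnegE) _.
apply: (@neg_tv_right_continuous _ 0 x (x + 1)) => //.
- by rewrite ltrDl.
- by apply: bounded_variation0; exact: addr_ge0.
- exact: g_right_cont.
Unshelve. all: by end_near. Qed.

Lemma jordan_neg_left_continuous a : 0 < a -> jneg g @ a^'- --> jneg g a.
Proof.
move=> a0.
have jnegE : {near a^'-,
    (fun y => (fine (total_variation 0 y g) - g y) / 2) =1 jneg g}.
  near=> y; rewrite jordan_negE//; apply: ltW; near: y; exact: nbhs_left_gt.
rewrite jordan_negE ?(ltW a0)//.
apply: cvg_trans (near_eq_cvg jnegE) _.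
apply: cvgM; last exact: cvg_cst.
apply: cvgB; last exact: cvg_at_left_filter (g_cont_gt0 a0).
apply: (@total_variation_left_continuous _ 0 a a) => //.
- exact: cvg_at_left_filter (g_cont_gt0 a0).
- by apply: bounded_variation0; exact: ltW.
Unshelve. all: by end_near. Qed.

Lemma dneg_itv_bndr a b : a <= b -> dneg g `]a, b] = (jneg g b - jneg g a)%:E.
Proof.
move=> ab; rewrite /dneg /to_cumulative; case: pselect => [cumulative|not_cumulative]; last first.
  by exfalso; apply: not_cumulative; split;
    [exact: jordan_neg_nondecreasing|exact: jordan_neg_right_continuous].
rewrite /lebesgue_stieltjes_measure /measure_extension measurable_mu_extE /=.
  by rewrite wlength_itv_bnd.
exact: is_ocitv.
Qed.

Lemma dneg_itv0y_lty : (dneg g `]0%R, +oo[ < +oo)%E.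
Proof.
apply: le_lt_trans (ltry M).
pose F n : set R := `]0, n%:R]%classic.
have FE : `]0, +oo[%classic = \bigcup_n F n.
  apply/seteqP; split => x /=.
    rewrite in_itv/= andbT => x0; exists (Num.truncn x).+1 => //.
    by rewrite /F /= in_itv/= x0 /= ltW// truncnS_gt.
  by move=> [n _]; rewrite /F /= !in_itv/= andbT => /andP[].
have F_nd : nondecreasing_seq F.
  move=> m n mn; apply/subsetPset => x; rewrite /F /= !in_itv/= => /andP[-> xm].
  by rewrite (le_trans xm)// ler_nat.
have := @nondecreasing_cvg_mu _ _ _ (dneg g) F (fun=> measurable_itv _).
rewrite -FE => /(_ (measurable_itv _) F_nd) dnegF.
rewrite [leLHS](_ : _ = lim (dneg g \o F @ \oo)); last exact/esym/cvg_lim.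
apply: lime_le; first by apply/cvg_ex; eexists; exact: dnegF.
apply: nearW => n /=; rewrite /F dneg_itv_bndr// lee_fin.
exact: jordan_neg_sub0_le.
Qed.

Lemma dneg_set1 a : 0 < a -> dneg g [set a] = 0%E.
Proof.
move=> a0; apply/eqP; rewrite eq_le measure_ge0 andbT.
apply/lee_addgt0Pr => e e0; rewrite add0e.
have := jordan_neg_left_continuous a0 => /cvgrPdist_lt /(_ e e0).
rewrite near_withinE => /nbhs_ballP[d /= d0 jneg_near].
have ad : a - d / 2 < a by rewrite ltrBlDr ltrDl divr_gt0.
have : ball a d (a - d / 2).
  rewrite /ball /= opprB addrC subrK ger0_norm ?divr_ge0 ?ltW//.
  by rewrite ltr_pdivrMr// ltr_pMr// ltr1n.
move=> /jneg_near /(_ ad) jneg_ad.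
apply: (@le_trans _ _ (dneg g `]a - d / 2, a])).
  by apply: le_measure; rewrite ?inE// => x /= ->; rewrite in_itv/= ad lexx.
rewrite dneg_itv_bndr ?(ltW ad)// lee_fin.
exact: le_trans (ler_norm _) (ltW jneg_ad).
Qed.

End jordan_neg.

Section dirichlet_kernel.
Context {R : realType}.

(* Bound satisfied by the real and imaginary parts of the Dirichlet kernel
   sum_(k < n) e^(i x (k + 1)), after multiplication by 2 sin (x/2). *)
Definition dirichlet_bounded (c : R -> R) :=
  forall (x : R) (n : nat), `|2 * sin (x / 2) * \sum_(k < n) c (x * k.+1%:R)| <= 2.

Lemma sin_half_sum_cos (x : R) n : 2 * sin (x / 2) * \sum_(k < n) cos (x * k.+1%:R) =
  sin (x * n%:R + x / 2) - sin (x / 2).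
Proof.
elim: n => [|n IH]; first by rewrite big_ord0 !mulr0 add0r subrr.
rewrite big_ord_recr /= mulrDr IH.
have -> : x * n%:R + x / 2 = x * n.+1%:R - x / 2 by rewrite -natr1; field.
rewrite sinB sinD; ring.
Qed.

Lemma sin_half_sum_sin (x : R) n : 2 * sin (x / 2) * \sum_(k < n) sin (x * k.+1%:R) =
  cos (x / 2) - cos (x * n%:R + x / 2).
Proof.
elim: n => [|n IH]; first by rewrite big_ord0 !mulr0 add0r subrr.
rewrite big_ord_recr /= mulrDr IH.
have -> : x * n%:R + x / 2 = x * n.+1%:R - x / 2 by rewrite -natr1; field.
rewrite cosB cosD; ring.
Qed.

Lemma dirichlet_bounded_cos : dirichlet_bounded cos.
Proof.
move=> x n; rewrite sin_half_sum_cos; apply: le_trans (ler_normB _ _) _.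
have := sin_max (x * n%:R + x / 2); have := sin_max (x / 2); lra.
Qed.

Lemma dirichlet_bounded_sin : dirichlet_bounded sin.
Proof.
move=> x n; rewrite sin_half_sum_sin; apply: le_trans (ler_normB _ _) _.
have := cos_max (x * n%:R + x / 2); have := cos_max (x / 2); lra.
Qed.

Lemma norm_le_inv_of_mul (s y : R) : `|2 * s * y| <= 2 -> s != 0 -> `|y| <= `|s|^-1.
Proof.
rewrite !normrM ger0_norm// => sy s0.
have s_gt0 : 0 < `|s| by rewrite normr_gt0.
rewrite -[leRHS]mul1r ler_pdivlMr// mulrC.
nra.
Qed.

Lemma dirichlet_mean_cvg0 (c : R -> R) (x : R) : dirichlet_bounded c -> sin (x / 2) != 0 ->
  (fun n => n.+1%:R^-1 * \sum_(k < n.+1) c (x * k.+1%:R)) @ \oo --> 0.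
Proof.
move=> c_dirichlet s0; have inv_gt0 : 0 < `|sin (x / 2)|^-1 by rewrite invr_gt0 normr_gt0.
apply/cvgr0Pnorm_le => e e0.
move: (@cvg_harmonic R) => /cvgr0Pnorm_le /(_ _ (divr_gt0 e0 inv_gt0)).
apply: filterS => n hn; rewrite normrM.
apply: le_trans (ler_pM _ _ hn (norm_le_inv_of_mul (c_dirichlet x n.+1) s0)) _ => //.
by rewrite divfK// gt_eqF.
Qed.

Lemma sin_eq0_gt0 (y : R) : 0 < y -> sin y = 0 -> exists m : nat, y = pi *+ m.+1.
Proof.
move=> y0 sy; have pi0 := @pi_gt0 R.
set n := Num.truncn (y / pi).
have /andP[ny yn] : n%:R <= y / pi < n.+1%:R.
  by apply: truncn_itv; rewrite divr_ge0// ltW.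
have r0 : 0 <= y - pi *+ n by rewrite subr_ge0 -mulr_natl -ler_pdivlMr.
have rpi : y - pi *+ n < pi by rewrite ltrBlDr -mulrS -mulr_natl -ltr_pdivrMr.
move: sy; rewrite -{1}(subrK (pi *+ n) y) (alternatingn (@sinDpi R)).
move=> /eqP; rewrite mulf_eq0 => /orP[|].
  by rewrite -signr_odd; case: (odd n); rewrite ?oppr_eq0 oner_eq0.
move: r0; rewrite le_eqVlt => /predU1P[r0|r0]; last by rewrite gt_eqF// sin_gt0_pi// r0 rpi.
move=> _; move/eqP: r0; rewrite eq_sym subr_eq0 => /eqP yn'.
move: yn'; clearbody n; case: n {ny yn rpi} => [|m] yn'; last by exists m.
by move: y0; rewrite yn' mulr0n ltxx.
Qed.

End dirichlet_kernel.

Section cesaro_mean_integral.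
Context {R : realType}.
Variable mu : {measure set (measurableTypeR R) -> \bar R}.
Local Notation D := (`]0%R, +oo[%classic : set (measurableTypeR R)).
Hypothesis mu_fin : (mu D < +oo)%E.
Hypothesis mu_set1 : forall a : R, 0 < a -> mu [set a] = 0%E.

Let mD : measurable D. Proof. exact: measurable_itv. Qed.

Lemma integrable_bounded_continuous (f : R -> R) (B : R) :
  continuous f -> (forall x, `|f x| <= B) -> mu.-integrable D (EFin \o f).
Proof.
move=> cf fB; apply: measurable_bounded_integrable => //.
  exact: measurable_funTS (measurable_realfun.continuous_measurable_fun cf).
exists B; split; first exact: num_real.
by move=> M BM x _ /=; rewrite (le_trans (fB x))// ltW.
Qed.

Lemma ae_sin_half_neq0 : {ae mu, forall x, D x -> sin (x / 2) != 0}.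
Proof.
pose N := \bigcup_m [set (pi *+ m.+1) *+ 2 : R].
have negN : mu.-negligible N.
  apply: negligible_bigcup => m; exists [set (pi *+ m.+1) *+ 2 : R]; split => //.
  by apply: mu_set1; rewrite pmulrn_lgt0// pmulrn_lgt0// pi_gt0.
apply: negligibleS negN => x /= Nx.
have x0 : 0 < x.
  by apply: contrapT => x_le0; apply: Nx; rewrite /= in_itv/= andbT => /x_le0.
have [s0|s0] := eqVneq (sin (x / 2)) 0; last by exfalso; apply: Nx.
have [m xm] := sin_eq0_gt0 (divr_gt0 x0 (ltr0n _ 2)) s0.
by exists m => //=; rewrite -xm mulr2n -splitr.
Qed.

Variable c : R -> R.
Hypothesis c_cont : continuous c.
Hypothesis c_le1 : forall y, `|c y| <= 1.
Hypothesis c_dirichlet : dirichlet_bounded c.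

Let c_k (k : nat) (x : R) := c (x * k.+1%:R).

Let c_k_int k : mu.-integrable D (EFin \o c_k k).
Proof.
apply: (@integrable_bounded_continuous _ 1) => [x|x]; last exact: c_le1.
by apply: continuous_comp; [exact: mulrr_continuous|exact: c_cont].
Qed.

Let mean n x : \bar R := (n.+1%:R^-1 * \sum_(k < n.+1) c_k k x)%:E.

Let meanE n : mean n = (fun x => (n.+1%:R^-1)%:E * \sum_(k < n.+1) (c_k k x)%:E)%E.
Proof. by apply/funext => x; rewrite /mean EFinM sumEFin. Qed.

Let mean_int n : mu.-integrable D (mean n).
Proof.
rewrite meanE; apply: integrableZl => //.
by apply: (integrable_sum mD _ (h := fun (k : 'I_n.+1) x => (c_k k x)%:E)) => k _; exact: c_k_int.
Qed.

Let integral_mean n :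
  (\int[mu]_(x in D) mean n x)%E =
  (n.+1%:R^-1 * \sum_(k < n.+1) Rintegral mu D (c_k k))%:E.
Proof.
rewrite meanE integralZl//; last first.
  by apply: (integrable_sum mD _ (h := fun (k : 'I_n.+1) x => (c_k k x)%:E)) => k _; exact: c_k_int.
rewrite (integral_sum mD (f := fun (k : 'I_n.+1) x => (c_k k x)%:E)); last exact: c_k_int.
rewrite EFinM -sumEFin; congr (_ * _)%E; apply: eq_bigr => k _.
by rewrite /Rintegral fineK //; apply: integrable_fin_num => //; exact: c_k_int.
Qed.

Let norm_mean_le1 n x : (`|mean n x| <= 1)%E.
Proof.
rewrite /mean lee_fin normrM ger0_norm ?invr_ge0// ler_pdivrMl// mulr1.
have -> : n.+1%:R = \sum_(k < n.+1) (1 : R) by rewrite sumr_const card_ord.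
by apply: le_trans (ler_norm_sum _ _ _) _; apply: ler_sum => k _; exact: c_le1.
Qed.

Lemma cesaro_mean_integral_cvg0 :
  (fun n => n.+1%:R^-1 * \sum_(k < n.+1) Rintegral mu D (c_k k)) @ \oo --> 0.
Proof.
have one_int : mu.-integrable D (EFin \o cst 1%R).
  by apply: (@integrable_bounded_continuous _ 1) => [|y]; [exact: cst_continuous|rewrite normr1].
have mean_cvg : {ae mu, forall x, D x -> mean ^~ x @ \oo --> (cst 0%E) x}.
  apply: filterS ae_sin_half_neq0 => x s0 Dx.
  apply: cvg_EFin; first exact: nearW.
  exact: dirichlet_mean_cvg0 c_dirichlet (s0 Dx).
have mean_le1 : {ae mu, forall x n, D x -> (`|mean n x| <= (EFin \o cst 1%R) x)%E}.
  by apply: aeW => x n _; exact: norm_mean_le1.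
have [_ _] := dominated_convergence mD (fun n => measurable_int mu (mean_int n))
  (measurable_cst (0%E : \bar R)) mean_cvg one_int mean_le1.
rewrite integral0; under eq_fun do rewrite integral_mean.
by move/fine_cvg.
Qed.

End cesaro_mean_integral.

Lemma dpos_dnegN (R : realType) (phi : R -> R) : dpos phi = dneg (\- phi).
Proof. by []. Qed.

Lemma stieltjes_cesaro_mean_cvg0 (R : realType) (phi : R -> R) (M : R)
  (phi_cont : {within `[0, +oo[, continuous phi})
  (phi_bv : forall b : R, 0 <= b -> (total_variation 0 b phi <= M%:E)%E)
  (c : R -> R) : continuous c -> (forall y, `|c y| <= 1) -> dirichlet_bounded c ->
  (fun n => n.+1%:R^-1 * \sum_(k < n.+1)
     stieltjes_integral phi (fun x => c (x * k.+1%:R))) @ \oo --> 0.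
Proof.
move=> c_cont c_le1 c_dirichlet.
have Nphi_bv b : 0 <= b -> (total_variation 0 b (\- phi)%R <= M%:E)%E.
  by move=> b0; rewrite total_variationN phi_bv.
have Nphi_cont : {within `[0, +oo[, continuous (\- phi)}.
  by move=> x; apply: continuous_comp; [exact: phi_cont|exact: opp_continuous].
have cesaro_cvg0 g := @cesaro_mean_integral_cvg0 R (dneg g).
rewrite /stieltjes_integral -[X in _ --> X]subr0; under eq_fun do rewrite sumrB mulrBr.
rewrite dpos_dnegN; apply: cvgB; apply: cesaro_cvg0 => //.
- exact: dneg_itv0y_lty Nphi_cont Nphi_bv.
- exact: dneg_set1 Nphi_cont Nphi_bv.
- exact: dneg_itv0y_lty phi_cont phi_bv.
- exact: dneg_set1 phi_cont phi_bv.
Qed.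

Lemma stieltjes_integers_cvg_eq0 (R : realType) (phi : R -> R) (M : R)
  (phi_cont : {within `[0, +oo[, continuous phi})
  (phi_bv : forall b : R, 0 <= b -> (total_variation 0 b phi <= M%:E)%E)
  (c : R -> R) (l : R) : continuous c -> (forall y, `|c y| <= 1) -> dirichlet_bounded c ->
  (fun k : nat => stieltjes_integral phi (fun x => c (x * k.+1%:R))) @ \oo --> l -> l = 0.
Proof.
move=> c_cont c_le1 c_dirichlet /cesaro; rewrite /arithmetic_mean /series /=.
under eq_fun do rewrite big_mkord.
move=> mean_cvgl.
exact: cvg_unique _ mean_cvgl (stieltjes_cesaro_mean_cvg0 phi_cont phi_bv c_cont c_le1 c_dirichlet).
Qed.

Theorem theorem1 (R : realType) (phi : R -> R)
  (phi_cont : {within `[0, +oo[, continuous phi})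
  (phi_int : (@lebesgue_measure R).-integrable `]0, +oo[ (EFin \o phi))
  (phi_bv : bounded_variation_halfline phi)
  (phi_lim : phi x @[x --> +oo] --> 0) :
  ((fourier_stieltjes phi t @[t --> +oo] --> (0 : R * R)) /\
   (fourier_stieltjes phi t @[t --> -oo] --> (0 : R * R)))
  <->
  (exists L : R * R,
     (fourier_stieltjes phi t @[t --> +oo] --> L) /\
     (fourier_stieltjes phi t @[t --> -oo] --> L)).
Proof.
split => [Phi0|[L [PhiL PhiL']]]; first by exists 0.
have [M phi_M] := phi_bv.
have k_cvgy : (fun k : nat => (k.+1%:R : R)) @ \oo --> +oo.
  by rewrite (cvg_shiftS (fun k : nat => k%:R : R)); exact: cvgr_idn.
have PhikL := cvg_comp _ _ k_cvgy PhiL.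
have L1 : L.1 = 0.
  apply: (stieltjes_integers_cvg_eq0 phi_cont phi_M (@continuous_cos R) (@cos_max R)
    dirichlet_bounded_cos).
  exact: cvg_comp PhikL cvg_fst.
have L2 : L.2 = 0.
  apply: (stieltjes_integers_cvg_eq0 phi_cont phi_M (@continuous_sin R) (@sin_max R)
    dirichlet_bounded_sin).
  exact: cvg_comp PhikL cvg_snd.
have -> : 0 = L by rewrite [L]surjective_pairing L1 L2.
by split.
Qed.
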